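(* Let $\bar p_{ij}>0$ ($i\in N=\{1,\dots,n\}$, $j\in M=\{1,\dots,m\}$) be given positive numbers. For a vector $f\in\mathbb{R}^n$ with positive components define $$\rho(f):=\frac{\max_{i\in N,j\in M}\bar p_{ij}/f_i}{\min_{i\in N,j\in M}\bar p_{ij}/f_i}.$$ Let $p^H_i:=\max_{j\in M}\bar p_{ij}$, $p^L_i:=\min_{j\in M}\bar p_{ij}$, $\rho_i:=p^H_i/p^L_i$, $\rho^*:=\max_{i\in N}\rho_i$, and $f^*_i:=\sqrt{p^L_ip^H_i}$. Then $\rho(f)\ge\rho^*$ for every positive vector $f$, and $\rho(f^* )=\rho^*$.
   Context: In the paper, $\bar p_{ij}$ is the optimal price of product $i$ for customer type $j$ under personalized pricing, and $\rho(f)=q_{\max}/q_{\min}$ determines the performance guarantee $1+\ln\rho(f)$ of pricing along the vector $f$; $f^*$ is called the robust factor. *)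

From mathcomp Require Import all_boot all_order all_algebra.
Set Implicit Arguments. Unset Strict Implicit. Unset Printing Implicit Defensive.
Import Order.TTheory GRing.Theory Num.Theory.
Local Open Scope ring_scope.

(* Customers/products indexed by 'I_n.+1 and 'I_m.+1 (nonempty index sets
   N = {1..n+1}, M = {1..m+1}).  Maxima and minima over nonempty finite sets
   are big max/min seeded with one of the elements (hence exact). *)

Section Defs.
Variables (R : realFieldType) (n m : nat).

Definition bmax (T : finType) (x0 : T) (F : T -> R) : R :=
  \big[Num.max/F x0]_(x : T) F x.
Definition bmin (T : finType) (x0 : T) (F : T -> R) : R :=
  \big[Num.min/F x0]_(x : T) F x.

Variable pbar : 'I_n.+1 -> 'I_m.+1 -> R.

Definition rho (f : 'I_n.+1 -> R) : R :=
  bmax (ord0, ord0) (fun ij : 'I_n.+1 * 'I_m.+1 => pbar ij.1 ij.2 / f ij.1)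
  / bmin (ord0, ord0) (fun ij : 'I_n.+1 * 'I_m.+1 => pbar ij.1 ij.2 / f ij.1).

Definition pH (i : 'I_n.+1) : R := bmax ord0 (fun j => pbar i j).
Definition pL (i : 'I_n.+1) : R := bmin ord0 (fun j => pbar i j).
Definition rho_i (i : 'I_n.+1) : R := pH i / pL i.
Definition rho_star : R := bmax ord0 rho_i.
End Defs.

Definition fstar (R : rcfType) n m (pbar : 'I_n.+1 -> 'I_m.+1 -> R)
  (i : 'I_n.+1) : R := Num.sqrt (pL pbar i * pH pbar i).

From mathcomp Require Import all_boot all_order all_algebra.
From mathcomp Require Import ring.
Set Implicit Arguments. Unset Strict Implicit. Unset Printing Implicit Defensive.
Import Order.TTheory GRing.Theory Num.Theory.
Local Open Scope ring_scope.

(* Every row i alone forces rho(f) >= rho_i: the ratio of its largest to its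
   smallest entry does not change when the row is divided by f_i, and it is a
   ratio of two entries of the matrix pbar_ij / f_i.  Conversely, dividing row
   i by the geometric mean f*_i of pL_i and pH_i puts all its entries in
   [1 / sqrt rho_i, sqrt rho_i], hence every entry of pbar_ij / f*_i lies in
   [1 / sqrt rho*, sqrt rho*], and the ratio of the extreme entries is at most
   rho*. *)

Section BigExtrema.
Variables (R : realFieldType) (T : finType) (x0 : T) (G : T -> R).

Lemma le_bmax x : G x <= bmax x0 G.
Proof. exact: le_bigmax. Qed.

Lemma bmin_le x : bmin x0 G <= G x.
Proof. exact: bigmin_le. Qed.

Lemma bmax_attained : exists x, bmax x0 G = G x.
Proof.
apply: (big_ind (fun v => exists x, v = G x)) => [|_ _ [x ->] [y ->]|x _].
- by exists x0.
- by case: (leP (G x) (G y)); [exists y | exists x].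
- by exists x.
Qed.

Lemma bmin_attained : exists x, bmin x0 G = G x.
Proof.
apply: (big_ind (fun v => exists x, v = G x)) => [|_ _ [x ->] [y ->]|x _].
- by exists x0.
- by case: (leP (G x) (G y)); [exists x | exists y].
- by exists x.
Qed.

Hypothesis G_gt0 : forall x, 0 < G x.

Lemma bmin_gt0 : 0 < bmin x0 G.
Proof. exact: lt_bigmin. Qed.

Lemma ler_div_bmax_bmin x y : G x / G y <= bmax x0 G / bmin x0 G.
Proof.
apply: ler_pM; [exact: ltW | by rewrite invr_ge0 ltW | exact: le_bmax |].
by rewrite lef_pV2 ?posrE ?bmin_le ?bmin_gt0.
Qed.

Lemma bmax_div_bmin_le r :
  (forall x, G x ^+ 2 <= r) -> (forall x, (G x)^-1 ^+ 2 <= r) ->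
  bmax x0 G / bmin x0 G <= r.
Proof.
move=> Gr Gr'; have [x ->] := bmax_attained; have [y ->] := bmin_attained.
have r_ge0 : 0 <= r by apply: le_trans (Gr x); exact: sqr_ge0.
have ratio_ge0 : 0 <= G x / G y by rewrite divr_ge0 ?ltW.
rewrite -ler_sqr ?nnegrE // exprMn [r ^+ 2]expr2.
by apply: ler_pM; rewrite ?sqr_ge0.
Qed.
End BigExtrema.

Section GeometricMean.
Variables (R : realFieldType) (a b p s : R).
Hypotheses (a_gt0 : 0 < a) (a_le_p : a <= p) (p_le_b : p <= b).
Hypothesis sqr_s : s ^+ 2 = a * b.

Let p_gt0 : 0 < p. Proof. exact: lt_le_trans a_le_p. Qed.
Let b_gt0 : 0 < b. Proof. exact: lt_le_trans p_le_b. Qed.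

Lemma sqr_div_geomean_le : (p / s) ^+ 2 <= b / a.
Proof.
have -> : b / a = b ^+ 2 / (a * b).
  by field; rewrite !gt_eqF.
rewrite expr_div_n sqr_s ler_pM2r ?invr_gt0 ?mulr_gt0 //.
by rewrite ler_sqr // nnegrE ltW.
Qed.

Lemma sqr_geomean_div_le : (s / p) ^+ 2 <= b / a.
Proof.
have -> : b / a = a * b / a ^+ 2.
  by field; rewrite !gt_eqF.
rewrite expr_div_n sqr_s ler_pM2l ?mulr_gt0 // lef_pV2 ?posrE ?exprn_gt0 //.
by rewrite ler_sqr // nnegrE ltW.
Qed.

End GeometricMean.

Section Pricing.
Variables (R : realFieldType) (n m : nat) (pbar : 'I_n.+1 -> 'I_m.+1 -> R).
Hypothesis pbar_gt0 : forall i j, 0 < pbar i j.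

Lemma pL_gt0 i : 0 < pL pbar i.
Proof. exact: bmin_gt0. Qed.

Lemma pL_le_pbar i j : pL pbar i <= pbar i j.
Proof. exact: bmin_le. Qed.

Lemma pbar_le_pH i j : pbar i j <= pH pbar i.
Proof. exact: le_bmax. Qed.

Lemma rho_i_le_rho_star i : rho_i pbar i <= rho_star pbar.
Proof. exact: le_bmax. Qed.

Lemma rho_i_le_rho f : (forall i, 0 < f i) -> forall i, rho_i pbar i <= rho pbar f.
Proof.
move=> f_gt0 i; rewrite /rho_i /pH /pL.
have [jH ->] := bmax_attained ord0 (fun j => pbar i j).
have [jL ->] := bmin_attained ord0 (fun j => pbar i j).
have -> : pbar i jH / pbar i jL = (pbar i jH / f i) / (pbar i jL / f i).
  by field; rewrite !gt_eqF.
apply: (ler_div_bmax_bmin _ _ (i, jH) (i, jL)) => ij.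
by rewrite divr_gt0.
Qed.

Lemma rho_star_le_rho f : (forall i, 0 < f i) -> rho_star pbar <= rho pbar f.
Proof. by move=> f_gt0; apply: bigmax_le => [|i _]; apply: rho_i_le_rho. Qed.

End Pricing.

Section RobustFactor.
Variables (R : rcfType) (n m : nat) (pbar : 'I_n.+1 -> 'I_m.+1 -> R).
Hypothesis pbar_gt0 : forall i j, 0 < pbar i j.

Let pH_gt0 i : 0 < pH pbar i.
Proof. exact: lt_le_trans (pbar_le_pH pbar i ord0). Qed.

Lemma fstar_gt0 i : 0 < fstar pbar i.
Proof. by rewrite sqrtr_gt0 mulr_gt0 ?pL_gt0. Qed.

Lemma sqr_fstar i : fstar pbar i ^+ 2 = pL pbar i * pH pbar i.
Proof. by rewrite sqr_sqrtr // mulr_ge0 ?ltW ?pL_gt0. Qed.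

Lemma rho_fstar_le_rho_star : rho pbar (fstar pbar) <= rho_star pbar.
Proof.
apply: bmax_div_bmin_le => [[i j]|[i j]|[i j]] /=.
- by rewrite divr_gt0 ?fstar_gt0.
- apply: le_trans (rho_i_le_rho_star pbar i).
  exact: sqr_div_geomean_le (pL_gt0 pbar_gt0 i) (pL_le_pbar pbar i j)
                            (pbar_le_pH pbar i j) (sqr_fstar i).
- rewrite invf_div; apply: le_trans (rho_i_le_rho_star pbar i).
  exact: sqr_geomean_div_le (pL_gt0 pbar_gt0 i) (pL_le_pbar pbar i j)
                            (pbar_le_pH pbar i j) (sqr_fstar i).
Qed.

End RobustFactor.

Theorem theorem2 (R : rcfType) (n m : nat) (pbar : 'I_n.+1 -> 'I_m.+1 -> R)
  (hp : forall i j, 0 < pbar i j) :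
  (forall f : 'I_n.+1 -> R, (forall i, 0 < f i) ->
     rho_star pbar <= rho pbar f) /\
  rho pbar (fstar pbar) = rho_star pbar.
Proof.
split=> [f f_gt0|]; first exact: rho_star_le_rho.
apply/le_anti; rewrite rho_fstar_le_rho_star //.
exact/rho_star_le_rho/fstar_gt0.
Qed.
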